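(* Let $G$ be a finitely generated group and $\phi\in\mathrm{Aut}(G)$. Then: (i) if $GCP_{f.g.}(G\rtimes_\phi\mathbb{Z})$ is decidable, then $GBrCP_{(f.g.,\phi)}(G)$ is decidable; (ii) if $GCP_{f.g.}(G\rtimes\mathbb{Z})$ is decidable, then $GBrCP_{f.g.}(G)$ is decidable; (iii) if $GCP_{[f.g.\,coset]}(G\rtimes_\phi\mathbb{Z})$ is decidable, then $GBrCP_{([f.g.\,coset],\phi)}(G)$ and $GTCP_{([f.g.\,coset],\phi)}(G)$ are decidable; (iv) if $GCP_{[f.g.\,coset]}(G\rtimes\mathbb{Z})$ is decidable, then $GBrCP_{[f.g.\,coset]}(G)$ and $GTCP_{[f.g.\,coset]}(G)$ are decidable.
   Context: $G\rtimes_\psi\mathbb{Z}$ is generated by $G$ and $t$ with $t^{-1}at=\psi(a)$. Subgroups are given by finite generating sets, cosets $yH$ by $y$ and generators of $H$. For a class $\mathcal C$ ($f.g.$ = finitely generated subgroups, $[f.g.\,coset]$ = cosets of finitely generated subgroups): $GCP_{\mathcal C}(X)$: given $K\in\mathcal C$ in the group $X$ and $x\in X$, decide whether some conjugate of $x$ lies in $K$; $GCP_{\mathcal C}(G\rtimes\mathbb{Z})$ is the uniform version in which the automorphism $\psi$ defining $G\rtimes_\psi\mathbb{Z}$ is also part of the input. $GBrCP_{\mathcal C}(G)$: given $K\in\mathcal C$ in $G$, $\psi\in\mathrm{Aut}(G)$, $x\in G$, decide whether some $\psi^k(x)$ ($k\in\mathbb{Z}$) is conjugate to an element of $K$. $GTCP_{\mathcal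 C}(G)$: given $K$, $\psi$, $x$, decide whether there is $z\in G$ with $\psi(z)^{-1}xz\in K$. A subscript $(\mathcal C,\phi)$ means the automorphism is fixed to be $\phi$ rather than being part of the input. *)

From HB Require Import structures.
From mathcomp Require Import all_boot all_order all_algebra.
Set Implicit Arguments. Unset Strict Implicit. Unset Printing Implicit Defensive.

Inductive recf : Type :=
| RZero : recf
| RSucc : recf
| RProj : nat -> recf
| RComp : recf -> seq recf -> recf
| RPrim : recf -> recf -> recf
| RMu   : recf -> recf.

Inductive reval : recf -> seq nat -> nat -> Prop :=
| evZero v : reval RZero v 0
| evSucc x v : reval RSucc (x :: v) x.+1
| evProj i v : reval (RProj i) v (nth 0 v i)
| evComp f gs v ys y : revals gs v ys -> reval f ys y -> reval (RComp f gs) v y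
| evPrim0 f g v y : reval f v y -> reval (RPrim f g) (0 :: v) y
| evPrimS f g n v z y : reval (RPrim f g) (n :: v) z -> reval g (n :: z :: v) y ->
    reval (RPrim f g) (n.+1 :: v) y
| evMu f v n : reval f (n :: v) 0 ->
    (forall m, m < n -> exists k, reval f (m :: v) k.+1) -> reval (RMu f) v n
with revals : seq recf -> seq nat -> seq nat -> Prop :=
| evsNil v : revals [::] v [::]
| evsCons g gs v y ys : reval g v y -> revals gs v ys -> revals (g :: gs) v (y :: ys).

(* A (promise) problem with instances in a countable type X, valid instances V,
   and yes-instances P, is decidable if some partial recursive function, applied
   to the (effective) code [pickle x] of any valid instance x, halts with 1 on
   yes-instances and with 0 on no-instances. *)
Definition decidable_on (X : countType) (V P : X -> Prop) : Prop :=
  exists e : recf, forall x : X, V x ->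
    (P x -> reval e [:: pickle x] 1) /\ (~ P x -> reval e [:: pickle x] 0).

Record gstr := GStr {
  gcar :> Type;
  gmul : gcar -> gcar -> gcar;
  ginv : gcar -> gcar;
  gone : gcar }.

Definition is_group (G : gstr) : Prop :=
  [/\ forall x y z : G, gmul x (gmul y z) = gmul (gmul x y) z,
      forall x : G, gmul (gone G) x = x,
      forall x : G, gmul x (gone G) = x,
      forall x : G, gmul (ginv x) x = gone G &
      forall x : G, gmul x (ginv x) = gone G].

(* Words: a letter (i, b) stands for s_i (b = false) or s_i^-1 (b = true). *)
Definition word := seq (nat * bool).

Definition weval (G : gstr) (S : seq G) (w : word) : G :=
  foldr (fun l acc => let g := nth (gone G) S l.1 in
                      gmul (if l.2 then ginv g else g) acc) (gone G) w.

Definition valid_word (n : nat) (w : word) : bool := all (fun l => l.1 < n) w.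

Definition generates (G : gstr) (S : seq G) : Prop :=
  forall g : G, exists w : word, g = weval S w.

Definition in_gen (G : gstr) (S : seq G) (x : G) : Prop :=
  exists w : word, x = weval S w.

Record aut (G : gstr) := Aut {
  af : G -> G;
  ainv : G -> G;
  af_mul : forall x y, af (gmul x y) = gmul (af x) (af y);
  af_K : cancel af ainv;
  ainv_K : cancel ainv af }.

Definition apow (G : gstr) (psi : aut G) (k : int) : G -> G :=
  match k with
  | Posz n => iter n (af psi)
  | Negz n => iter n.+1 (ainv psi)
  end.

(* Semidirect product G x|_psi Z, generated by G and t with t^-1 a t = psi(a).
   The pair (k, g) represents t^k g. *)
Definition sd_mul (G : gstr) (psi : aut G) (x y : int * G) : int * G :=
  ((x.1 + y.1)%R, gmul (apow psi y.1 x.2) y.2).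
Definition sd_inv (G : gstr) (psi : aut G) (x : int * G) : int * G :=
  ((- x.1)%R, apow psi (- x.1)%R (ginv x.2)).
Definition sdprod (G : gstr) (psi : aut G) : gstr :=
  @GStr (int * G)%type (sd_mul psi) (sd_inv psi) (0%R, gone G).

(* generators of G x|_psi Z: index 0 is t, index i.+1 is the i-th generator of G *)
Definition sd_gens (G : gstr) (psi : aut G) (S : seq G) : seq (sdprod psi) :=
  ((1%R, gone G) : sdprod psi) :: map (fun g => ((0%R, g) : sdprod psi)) S.

Definition conjg_ (G : gstr) (x z : G) : G := gmul (gmul (ginv z) x) z.

(* Classes of subsets: f.g. subgroups and cosets of f.g. subgroups.    *)
Inductive klass := FG | Coset.

Definition Kin (c : klass) : countType :=
  match c with
  | FG => seq word                       (* generators of K *)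
  | Coset => (word * seq word)%type      (* y and generators of H, K = yH *)
  end.

Definition Kvalid (n : nat) (c : klass) : Kin c -> Prop :=
  match c with
  | FG => fun ks : seq word => all (valid_word n) ks
  | Coset => fun yh : word * seq word => valid_word n yh.1 && all (valid_word n) yh.2
  end.

Definition Kmem (G : gstr) (S : seq G) (c : klass) : Kin c -> G -> Prop :=
  match c with
  | FG => fun (ks : seq word) x => in_gen (map (weval S) ks) x
  | Coset => fun (yh : word * seq word) x =>
      exists h, in_gen (map (weval S) yh.2) h /\ x = gmul (weval S yh.1) h
  end.

(* an automorphism given by the words imgs, images of the generators *)
Definition aut_matches (G : gstr) (S : seq G) (psi : aut G) (imgs : seq word) : Prop :=
  size imgs = size S /\
  forall i, i < size S -> af psi (nth (gone G) S i) = weval S (nth [::] imgs i).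

Definition aut_valid (G : gstr) (S : seq G) (imgs : seq word) : Prop :=
  all (valid_word (size S)) imgs /\ exists psi : aut G, aut_matches S psi imgs.

(* GCP_C (G x|_phi Z) : input K in C and x, words over t, generators of G *)
Definition GCP_prop (G : gstr) (S : seq G) (psi : aut G) (c : klass)
  (i : Kin c * word) : Prop :=
  exists z : sdprod psi,
    Kmem (sd_gens psi S) i.1 (conjg_ (weval (sd_gens psi S) i.2) z).

Definition GCP_fixed (G : gstr) (S : seq G) (phi : aut G) (c : klass) : Prop :=
  @decidable_on (Kin c * word)%type
    (fun i => Kvalid (size S).+1 i.1 /\ valid_word (size S).+1 i.2)
    (@GCP_prop G S phi c).

(* uniform version: the automorphism is part of the input *)
Definition GCP_unif (G : gstr) (S : seq G) (c : klass) : Prop :=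
  @decidable_on (seq word * (Kin c * word))%type
    (fun i => aut_valid S i.1 /\ Kvalid (size S).+1 i.2.1 /\ valid_word (size S).+1 i.2.2)
    (fun i => exists psi : aut G, aut_matches S psi i.1 /\ @GCP_prop G S psi c i.2).

Definition GBrCP_prop (G : gstr) (S : seq G) (psi : aut G) (c : klass)
  (i : Kin c * word) : Prop :=
  exists (k : int) (z : G), Kmem S i.1 (conjg_ (apow psi k (weval S i.2)) z).

Definition GTCP_prop (G : gstr) (S : seq G) (psi : aut G) (c : klass)
  (i : Kin c * word) : Prop :=
  exists z : G, Kmem S i.1 (gmul (gmul (ginv (af psi z)) (weval S i.2)) z).

Definition Gproblem_fixed (G : gstr) (S : seq G) (phi : aut G) (c : klass)
  (P : aut G -> Kin c * word -> Prop) : Prop :=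
  @decidable_on (Kin c * word)%type
    (fun i => Kvalid (size S) i.1 /\ valid_word (size S) i.2)
    (P phi).

Definition Gproblem_unif (G : gstr) (S : seq G) (c : klass)
  (P : aut G -> Kin c * word -> Prop) : Prop :=
  @decidable_on (seq word * (Kin c * word))%type
    (fun i => aut_valid S i.1 /\ Kvalid (size S) i.2.1 /\ valid_word (size S) i.2.2)
    (fun i => exists psi : aut G, aut_matches S psi i.1 /\ P psi i.2).

Definition GBrCP_fixed (G : gstr) (S : seq G) (phi : aut G) (c : klass) : Prop :=
  Gproblem_fixed S phi (fun psi => @GBrCP_prop G S psi c).
Definition GBrCP_unif (G : gstr) (S : seq G) (c : klass) : Prop :=
  Gproblem_unif S (fun psi => @GBrCP_prop G S psi c).
Definition GTCP_fixed (G : gstr) (S : seq G) (phi : aut G) (c : klass) : Prop :=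
  Gproblem_fixed S phi (fun psi => @GTCP_prop G S psi c).
Definition GTCP_unif (G : gstr) (S : seq G) (c : klass) : Prop :=
  Gproblem_unif S (fun psi => @GTCP_prop G S psi c).

(* Write [t] for the generator of [Z] in [G x|_psi Z].  Conjugating [x] (resp. [t x])
   by [t^k g] gives [g^-1 psi^k(x) g] (resp. [t psi(g)^-1 psi^k(x) g]).  Hence some
   conjugate of [x] lies in [K <= G] iff some [psi^k(x)] is conjugate into [K], and
   some conjugate of [t x] lies in [t y H] iff some [psi^k(x)] is [psi]-twisted
   conjugate into [y H], iff [x] is, since [psi^k(x)] is twisted conjugate to [x].
   The corresponding maps on instances only shift generator indices and prepend
   [t], so they are computable, and the problems on [G] many-one reduce to the
   conjugacy problems of [G x|_psi Z]. *)

From mathcomp Require Import all_boot all_order all_algebra.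
From mathcomp Require Import zify.
Set Implicit Arguments. Unset Strict Implicit. Unset Printing Implicit Defensive.
Import GRing.Theory.

Local Notation P0 := (RProj 0).
Local Notation P1 := (RProj 1).
Local Notation P2 := (RProj 2).

(** * Partial recursive functions *)

Section Evaluation.
Implicit Types (f g : recf) (v : seq nat).

Lemma reval_proj i v y : y = nth 0 v i -> reval (RProj i) v y.
Proof. by move=> ->; constructor. Qed.

Lemma reval_comp1 f g v y1 y : reval g v y1 -> reval f [:: y1] y -> reval (RComp f [:: g]) v y.
Proof. by move=> H1 H; apply: evComp H; do !constructor. Qed.

Lemma reval_comp2 f g1 g2 v y1 y2 y : reval g1 v y1 -> reval g2 v y2 ->
  reval f [:: y1; y2] y -> reval (RComp f [:: g1; g2]) v y.
Proof. by move=> H1 H2 H; apply: evComp H; do !constructor. Qed.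

Lemma reval_comp3 f g1 g2 g3 v y1 y2 y3 y :
  reval g1 v y1 -> reval g2 v y2 -> reval g3 v y3 ->
  reval f [:: y1; y2; y3] y -> reval (RComp f [:: g1; g2; g3]) v y.
Proof. by move=> H1 H2 H3 H; apply: evComp H; do !constructor. Qed.

Lemma reval_prim_le f g v (F : nat -> nat) N : reval f v (F 0) ->
  (forall n, n < N -> reval g (n :: F n :: v) (F n.+1)) ->
  forall n, n <= N -> reval (RPrim f g) (n :: v) (F n).
Proof.
move=> H0 HS; elim=> [|n IH] le_nN; first by constructor.
exact: evPrimS (IH (ltnW le_nN)) (HS n le_nN).
Qed.

Lemma reval_prim f g v (F : nat -> nat) : reval f v (F 0) ->
  (forall n, reval g (n :: F n :: v) (F n.+1)) -> forall n, reval (RPrim f g) (n :: v) (F n).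
Proof. by move=> H0 HS n; apply: (reval_prim_le (N := n)). Qed.

Lemma reval_mu f v (F : nat -> nat) n : (forall m, reval f (m :: v) (F m)) -> F n = 0 ->
  (forall m, m < n -> 0 < F m) -> reval (RMu f) v n.
Proof.
move=> Hf Fn0 Fm_gt0; apply: evMu; first by rewrite -Fn0.
by move=> m /Fm_gt0 Fm; exists (F m).-1; rewrite prednK.
Qed.

End Evaluation.

Fixpoint rconst n := if n is n'.+1 then RComp RSucc [:: rconst n'] else RZero.
Lemma reval_rconst n v : reval (rconst n) v n.
Proof.
elim: n v => [|n IH] v /=; first by constructor.
by apply: reval_comp1 (IH v) _; constructor.
Qed.

Definition radd := RPrim P0 (RComp RSucc [:: P1]).
Lemma reval_radd a b : reval radd [:: a; b] (a + b).
Proof.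
apply: (reval_prim (F := addn^~ b)) => [|n]; first exact: reval_proj.
by apply: reval_comp1; [exact: reval_proj | constructor].
Qed.

Definition rmul := RPrim RZero (RComp radd [:: P1; P2]).
Lemma reval_rmul a b : reval rmul [:: a; b] (a * b).
Proof.
apply: (reval_prim (F := muln^~ b)) => [|n]; first by constructor.
apply: reval_comp2; [exact: reval_proj | exact: reval_proj |].
by rewrite mulSn addnC; apply: reval_radd.
Qed.

Definition rpred := RPrim RZero P0.
Lemma reval_rpred a : reval rpred [:: a] a.-1.
Proof. by apply: (reval_prim (F := predn)) => [|n]; [constructor | exact: reval_proj]. Qed.

(* [RPrim] recurses on its first argument, hence the swap. *)
Definition rsub := RComp (RPrim P0 (RComp rpred [:: P1])) [:: P1; P0].
Lemma reval_rsub a b : reval rsub [:: a; b] (a - b).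
Proof.
apply: reval_comp2; [exact: reval_proj | exact: reval_proj |].
apply: (reval_prim (F := subn a)) => [|n]; first by rewrite subn0; exact: reval_proj.
by apply: reval_comp1; [exact: reval_proj | rewrite subnS; apply: reval_rpred].
Qed.

Definition rexp2 := RPrim (rconst 1) (RComp radd [:: P1; P1]).
Lemma reval_rexp2 k : reval rexp2 [:: k] (2 ^ k).
Proof.
apply: (reval_prim (F := expn 2)) => [|n]; first exact: reval_rconst.
apply: reval_comp2; [exact: reval_proj | exact: reval_proj |].
by rewrite expnS mul2n -addnn; apply: reval_radd.
Qed.

Definition rodd := RPrim RZero (RComp rsub [:: rconst 1; P1]).
Lemma reval_rodd a : reval rodd [:: a] (odd a).
Proof.
apply: (reval_prim (F := fun a => nat_of_bool (odd a))) => [|n]; first by constructor.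
apply: reval_comp2; [exact: reval_rconst | exact: reval_proj |].
have -> : nat_of_bool (odd n.+1) = 1 - odd n by rewrite /=; case: (odd n).
exact: reval_rsub.
Qed.

Definition rcond := RPrim P0 (RProj 3).
Lemma reval_rcond z a b : reval rcond [:: z; a; b] (if z == 0 then a else b).
Proof.
by apply: (reval_prim (F := fun z => if z == 0 then a else b)) => [|n]; exact: reval_proj.
Qed.

(* The least [q] with [(q + 1) d > c]. *)
Definition rdiv := RMu (RComp rsub [:: RComp RSucc [:: P1];
                                     RComp rmul [:: RComp RSucc [:: P0]; P2]]).
Lemma reval_rdiv c d : 0 < d -> reval rdiv [:: c; d] (c %/ d).
Proof.
move=> d_gt0; apply: (reval_mu (F := fun q => c.+1 - q.+1 * d)).
- move=> m; apply: reval_comp2; last exact: reval_rsub.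
    by apply: reval_comp1; [exact: reval_proj | constructor].
  apply: reval_comp2; last exact: reval_rmul; last exact: reval_proj.
  by apply: reval_comp1; [exact: reval_proj | constructor].
- by apply/eqP; rewrite subn_eq0 ltn_ceil.
- by move=> m lt_mq; rewrite subn_gt0 ltnS -leq_divRL.
Qed.

(** * Coded lists *)

Local Notation code := CodeSeq.code.
Local Notation decode := CodeSeq.decode.

Lemma code_cons n s : code (n :: s) = 2 ^ n * (code s).*2.+1.
Proof. by []. Qed.

Lemma size_code s : size s <= code s.
Proof.
elim: s => [|n s IH] //; rewrite code_cons /=.
apply: (leq_trans _ (leq_pmull _ (expn_gt0 2 n))); rewrite ltnS -addnn.
exact: leq_trans IH (leq_addr _ _).
Qed.

(* [code (n :: s)] is [2 ^ n] times an odd number, so its head is the least [k]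
   with [c %/ 2 ^ k] odd; the factor [c - k] stops the search at [c = 0]. *)
Definition rhead_test :=
  RComp rmul [:: RComp rsub [:: rconst 1; RComp rodd [:: RComp rdiv [:: P1; RComp rexp2 [:: P0]]]];
                 RComp rsub [:: P1; P0]].
Definition rhead := RMu rhead_test.

Lemma reval_rhead_test c k : reval rhead_test [:: k; c] ((1 - odd (c %/ 2 ^ k)) * (c - k)).
Proof.
apply: reval_comp2; last exact: reval_rmul.
  apply: reval_comp2; [exact: reval_rconst | | exact: reval_rsub].
  apply: reval_comp1; last exact: reval_rodd.
  apply: reval_comp2; [exact: reval_proj | | apply: reval_rdiv; exact: expn_gt0].
  by apply: reval_comp1; [exact: reval_proj | exact: reval_rexp2].
by apply: reval_comp2; [exact: reval_proj | exact: reval_proj | exact: reval_rsub].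
Qed.

Lemma reval_rhead s : reval rhead [:: code s] (head 0 s).
Proof.
case: s => [|n s].
  by apply: (reval_mu (F := fun k => (1 - odd (0 %/ 2 ^ k)) * (0 - k))) => // m;
     exact: reval_rhead_test.
set c := code (n :: s); apply: (reval_mu (F := fun k => (1 - odd (c %/ 2 ^ k)) * (c - k))).
- by move=> k; exact: reval_rhead_test.
- by rewrite /c code_cons mulKn ?expn_gt0 //= odd_double.
move=> k /= lt_kn; have Ec : c = 2 ^ k * (2 ^ (n - k) * (code s).*2.+1).
  by rewrite /c code_cons mulnA -expnD subnKC // ltnW.
have n_lt_c : n < c.
  by apply: leq_trans (ltn_expl n (ltnSn 1)) _; rewrite /c code_cons leq_pmulr.
have odd_quot : odd (2 ^ (n - k) * (code s).*2.+1) = false.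
  by rewrite oddM oddX /= orbF subn_eq0 leqNgt lt_kn.
rewrite {1}Ec mulKn ?expn_gt0 // odd_quot /= mul1n subn_gt0.
exact: ltn_trans lt_kn n_lt_c.
Qed.

Definition rbehead := RComp rdiv [:: P0; RComp rexp2 [:: RComp RSucc [:: rhead]]].
Lemma reval_rbehead s : reval rbehead [:: code s] (code (behead s)).
Proof.
apply: reval_comp2; [exact: reval_proj | |].
  apply: reval_comp1; last exact: reval_rexp2.
  by apply: reval_comp1 (reval_rhead s) _; constructor.
have -> : code (behead s) = code s %/ 2 ^ (head 0 s).+1.
  by case: s => [|n s] //; rewrite code_cons /= expnSr divnMl ?expn_gt0 //; lia.
by apply: reval_rdiv; exact: expn_gt0.
Qed.

Definition rcode_cons :=
  RComp rmul [:: RComp rexp2 [:: P0]; RComp RSucc [:: RComp radd [:: P1; P1]]].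
Lemma reval_rcode_cons x s : reval rcode_cons [:: x; code s] (code (x :: s)).
Proof.
apply: reval_comp2; last exact: reval_rmul.
  by apply: reval_comp1; [exact: reval_proj | exact: reval_rexp2].
apply: reval_comp1; last by constructor.
apply: reval_comp2; [exact: reval_proj | exact: reval_proj |].
by rewrite -addnn; exact: reval_radd.
Qed.

Definition rdrop := RPrim P0 (RComp rbehead [:: P1]).
Lemma reval_rdrop k s : reval rdrop [:: k; code s] (code (drop k s)).
Proof.
apply: (reval_prim (F := fun k => code (drop k s))) => [|n].
  by rewrite drop0; exact: reval_proj.
apply: reval_comp1; first exact: reval_proj.
have -> : drop n.+1 s = behead (drop n s) by rewrite -drop1 drop_drop add1n.
exact: reval_rbehead.
Qed.

(* Step [j] of the recursion on [c = code s] maps [foldr F a (drop (c - j) s)]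
   to [foldr F a (drop (c - j.+1) s)]; [c] steps suffice since [size s <= c]. *)
Definition rfoldr_rest := RComp rdrop [:: RComp rsub [:: P2; RComp RSucc [:: P0]]; P2].
Definition rfoldr g a :=
  RComp (RPrim (rconst a)
     (RComp rcond [:: rfoldr_rest; P1; RComp g [:: RComp rhead [:: rfoldr_rest]; P1]]))
    [:: P0; P0].

Lemma reval_rfoldr g a (F : nat -> nat -> nat) :
  (forall x y, reval g [:: x; y] (F x y)) ->
  forall s, reval (rfoldr g a) [:: code s] (foldr F a s).
Proof.
move=> HF s; set c := code s.
apply: reval_comp2; [exact: reval_proj | exact: reval_proj |].
have -> : foldr F a s = foldr F a (drop (c - c) s) by rewrite subnn drop0.
apply: (reval_prim_le (F := fun j => foldr F a (drop (c - j) s)) (N := c)) => //.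
  by rewrite subn0 drop_oversize ?size_code //; exact: reval_rconst.
move=> j lt_jc /=.
have -> : drop (c - j) s = behead (drop (c - j.+1) s).
  by rewrite subnS -drop1 drop_drop add1n prednK // subn_gt0.
have Hrest : reval rfoldr_rest [:: j; foldr F a (behead (drop (c - j.+1) s)); c]
               (code (drop (c - j.+1) s)).
  apply: reval_comp2; [| exact: reval_proj | exact: reval_rdrop].
  apply: reval_comp2; [exact: reval_proj | | exact: reval_rsub].
  by apply: reval_comp1; [exact: reval_proj | constructor].
have Hstep := reval_comp2 (reval_comp1 Hrest (reval_rhead _)) (evProj 1 _) (HF _ _).
move: Hrest Hstep; case: (drop (c - j.+1) s) => [|x t] Hrest Hstep /=.
  exact: reval_comp3 Hrest (evProj 1 _) Hstep (reval_rcond _ _ _).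
apply: reval_comp3 Hrest (evProj 1 _) Hstep _.
have code_nz : (code (x :: t) == 0) = false by rewrite code_cons muln_eq0 expn_eq0.
by have := reval_rcond (code (x :: t)) (foldr F a t) (F x (foldr F a t)); rewrite code_nz.
Qed.

(** * Computable maps between countable types *)

Lemma pickle_seq (T : countType) (s : seq T) : pickle s = code (map pickle s).
Proof. by []. Qed.

Lemma pickle_pair (X Y : countType) (x : X) (y : Y) :
  pickle (x, y) = code [:: pickle x; pickle y].
Proof. by []. Qed.

Lemma pickle_letter (l : nat * bool) : pickle l = code [:: l.1; nat_of_bool l.2].
Proof. by []. Qed.

(* Totality, not just correctness on codes, is needed because [rfoldr] evaluates
   both branches of its conditional, i.e. also runs the step on junk input. *)
Definition computable (X Y : countType) (f : X -> Y) : Prop :=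
  exists (e : recf) (F : nat -> nat),
    (forall n, reval e [:: n] (F n)) /\ forall x, F (pickle x) = pickle (f x).

Lemma decidable_on_reduce (X Y : countType) (VX PX : X -> Prop) (VY PY : Y -> Prop)
    (f : Y -> X) :
  computable f -> (forall y, VY y -> VX (f y) /\ (PX (f y) <-> PY y)) ->
  decidable_on VX PX -> decidable_on VY PY.
Proof.
move=> [ef [F [eF Fpickle]]] f_red [e decide_e]; exists (RComp e [:: ef]) => y /f_red.
move=> [/decide_e [yes no] PXY]; have := eF (pickle y); rewrite Fpickle => Hf.
by split=> Py; apply: reval_comp1 Hf _; [apply: yes | apply: no]; rewrite PXY.
Qed.

Section Computable.
Variables X Y Z : countType.

Lemma computable_comp (f : X -> Y) (g : Y -> Z) :
  computable f -> computable g -> computable (g \o f).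
Proof.
move=> [ef [F [eF Fpickle]]] [eg [G [eG Gpickle]]].
exists (RComp eg [:: ef]), (G \o F); split=> [n | x] /=; last by rewrite Fpickle Gpickle.
exact: reval_comp1 (eF n) (eG _).
Qed.

Lemma computable_pair (f : X -> Y) (g : X -> Z) :
  computable f -> computable g -> computable (fun x => (f x, g x)).
Proof.
move=> [ef [F [eF Fpickle]]] [eg [G [eG Gpickle]]].
exists (RComp rcode_cons [:: ef; RComp rcode_cons [:: eg; RZero]]).
exists (fun n => code [:: F n; G n]).
split=> [n | x]; last by rewrite pickle_pair Fpickle Gpickle.
apply: reval_comp2 (eF n) _ (reval_rcode_cons _ [:: _]).
exact: reval_comp2 (eG n) (evZero _) (reval_rcode_cons _ [::]).
Qed.

Lemma computable_fst : computable (@fst X Y).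
Proof.
exists rhead, (fun n => head 0 (decode n)); split=> [n | [x y]].
  by rewrite -{1}(CodeSeq.decodeK n); exact: reval_rhead.
by rewrite pickle_pair CodeSeq.codeK.
Qed.

Lemma computable_snd : computable (@snd X Y).
Proof.
exists (RComp rhead [:: rbehead]), (fun n => head 0 (behead (decode n))); split=> [n | [x y]].
  rewrite -{1}(CodeSeq.decodeK n).
  exact: reval_comp1 (reval_rbehead _) (reval_rhead _).
by rewrite pickle_pair CodeSeq.codeK.
Qed.

Lemma computable_map (f : X -> Y) : computable f -> computable (map f).
Proof.
move=> [ef [F [eF Fpickle]]].
exists (rfoldr (RComp rcode_cons [:: RComp ef [:: P0]; P1]) 0).
exists (fun n => code (map F (decode n))); split=> [n | s]; last first.
  by rewrite !pickle_seq CodeSeq.codeK -!map_comp; congr code; apply: eq_map => x /=.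
have -> : code (map F (decode n)) = foldr (fun x c => code (F x :: decode c)) 0 (decode n).
  by elim: (decode n) => [|x s IH] //=; rewrite -IH CodeSeq.codeK.
rewrite -{1}(CodeSeq.decodeK n); apply: reval_rfoldr => x c.
apply: reval_comp2; [exact: reval_comp1 (evProj 0 [:: x; c]) (eF x) | exact: evProj |].
by rewrite -{1}(CodeSeq.decodeK c); exact: reval_rcode_cons.
Qed.

Lemma computable_cons (a : X) : computable (cons a).
Proof.
exists (RComp rcode_cons [:: rconst (pickle a); P0]), (fun n => code (pickle a :: decode n)).
split=> [n | s]; last by rewrite !pickle_seq CodeSeq.codeK.
apply: reval_comp2 (reval_rconst _ _) (evProj 0 _) _.
by rewrite -{1}(CodeSeq.decodeK n); exact: reval_rcode_cons.
Qed.

End Computable.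

(** * Twisted conjugacy *)

Section Automorphism.
Variables (G : gstr) (psi : aut G).
Local Notation "x * y" := (gmul x y).
Local Notation af := (af psi).
Local Notation ai := (ainv psi).
Implicit Types x y : G.

Lemma ainvM x y : ai (x * y) = ai x * ai y.
Proof. by apply: (can_inj (af_K psi)); rewrite af_mul !ainv_K. Qed.

Lemma apowM k x y : apow psi k (x * y) = apow psi k x * apow psi k y.
Proof.
have iterM f : {morph f : u v / u * v} -> forall n, {morph iter n f : u v / u * v}.
  by move=> fM; elim=> [|n IH] u v //=; rewrite IH fM.
by case: k => n; apply: iterM => u v; [exact: af_mul | exact: ainvM].
Qed.

Lemma apow_af k x : apow psi k (af x) = af (apow psi k x).
Proof.
case: k => n; rewrite /apow; first by elim: n => [|n IH] //=; rewrite IH.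
by elim: n.+1 => [|m IH] //=; rewrite IH ainv_K af_K.
Qed.

Lemma apowNK k x : apow psi k (apow psi (- k)%R x) = x.
Proof.
have iterK f g : cancel g f -> forall n u, iter n f (iter n g u) = u.
  by move=> gK; elim=> [|n IH] u //; rewrite iterSr iterS gK IH.
case: k => [[|n]|n] //.
  by change (iter n.+1 af (iter n.+1 ai x) = x); apply: iterK; exact: ainv_K.
by change (iter n.+1 ai (iter n.+1 af x) = x); apply: iterK; exact: af_K.
Qed.

End Automorphism.

Section Group.
Variable G : gstr.
Hypothesis HG : is_group G.
Local Notation "x * y" := (gmul x y).
Local Notation one := (gone G).
Implicit Types x y z : G.

Lemma gmulA x y z : x * (y * z) = (x * y) * z. Proof. by case: HG. Qed.
Lemma gmul1g x : one * x = x. Proof. by case: HG. Qed.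
Lemma gmulg1 x : x * one = x. Proof. by case: HG. Qed.
Lemma gmulVg x : ginv x * x = one. Proof. by case: HG. Qed.
Lemma gmulgV x : x * ginv x = one. Proof. by case: HG. Qed.

Lemma ginv_uniq x y : x * y = one -> y = ginv x.
Proof. by move=> xy1; rewrite -[y]gmul1g -(gmulVg x) -gmulA xy1 gmulg1. Qed.

Lemma ginvK x : ginv (ginv x) = x.
Proof. by symmetry; apply: ginv_uniq; rewrite gmulVg. Qed.

Lemma ginvM x y : ginv (x * y) = ginv y * ginv x.
Proof. by symmetry; apply: ginv_uniq; rewrite gmulA -(gmulA x) gmulgV gmulg1 gmulgV. Qed.

Lemma ginv1 : ginv one = one.
Proof. by symmetry; apply: ginv_uniq; rewrite gmul1g. Qed.

Variable psi : aut G.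
Local Notation af := (af psi).
Local Notation ai := (ainv psi).

Lemma af1 : af one = one.
Proof.
apply: (@can_inj _ _ (gmul (af one)) (gmul (ginv (af one)))).
  by move=> x; rewrite gmulA gmulVg gmul1g.
by rewrite -af_mul !gmulg1.
Qed.

Lemma afV x : af (ginv x) = ginv (af x).
Proof. by apply: ginv_uniq; rewrite -af_mul gmulgV af1. Qed.

Definition twisted_conj x y := exists w, y = ginv (af w) * x * w.

Lemma twisted_conj_trans x y z : twisted_conj x y -> twisted_conj y z -> twisted_conj x z.
Proof. by move=> [w ->] [v ->]; exists (w * v); rewrite af_mul ginvM !gmulA. Qed.

Lemma twisted_conj_af x : twisted_conj x (af x).
Proof. by exists (ginv x); rewrite afV ginvK -gmulA gmulgV gmulg1. Qed.

Lemma twisted_conj_ainv x : twisted_conj x (ai x).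
Proof. by exists (ai x); rewrite ainv_K gmulVg gmul1g. Qed.

Lemma twisted_conj_apow k x : twisted_conj x (apow psi k x).
Proof.
have twisted_conj_iter f : (forall u, twisted_conj u (f u)) ->
    forall n, twisted_conj x (iter n f x).
  move=> Hf; elim=> [|n IH] /=; last exact: twisted_conj_trans IH (Hf _).
  by exists one; rewrite af1 ginv1 gmul1g gmulg1.
by case: k => n; apply: twisted_conj_iter; [exact: twisted_conj_af | exact: twisted_conj_ainv].
Qed.

End Group.

(** * Reduction to the conjugacy problem of the semidirect product *)

(* Index [0] of [sd_gens] is [t], so a word over [S] is read over [sd_gens]
   by shifting every index by one. *)
Definition shift_letter (l : nat * bool) : nat * bool := (l.1.+1, l.2).
Definition lift_word (w : word) : word := map shift_letter w.
Definition t_word (w : word) : word := (0, false) :: lift_word w.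
Arguments t_word : simpl never.

Definition lift_K (c : klass) : Kin c -> Kin c :=
  match c with
  | FG => map lift_word
  | Coset => fun yh => (lift_word yh.1, map lift_word yh.2)
  end.

Definition lift_instance (c : klass) (i : Kin c * word) : Kin c * word :=
  (lift_K i.1, lift_word i.2).

Definition t_instance (i : Kin Coset * word) : Kin Coset * word :=
  ((t_word i.1.1, map lift_word i.1.2), t_word i.2).

Lemma computable_shift_letter : computable shift_letter.
Proof.
exists (RComp radd [:: P0; P0]), (fun n => n + n); split=> [n | [i b]].
  exact: reval_comp2 (evProj 0 [:: n]) (evProj 0 [:: n]) (reval_radd n n).
by rewrite !pickle_letter !code_cons /= expnS -mulnA mul2n addnn.
Qed.

Lemma computable_lift_word : computable lift_word.
Proof. exact: computable_map computable_shift_letter. Qed.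

Lemma computable_t_word : computable t_word.
Proof. exact: computable_comp computable_lift_word (computable_cons _). Qed.

Lemma computable_lift_instance c : computable (@lift_instance c).
Proof.
apply: computable_pair; last exact: computable_comp (computable_snd _ _) computable_lift_word.
apply: computable_comp (computable_fst _ _) _; case: c => /=.
  exact: computable_map computable_lift_word.
apply: computable_pair; first exact: computable_comp (computable_fst _ _) computable_lift_word.
exact: computable_comp (computable_snd _ _) (computable_map computable_lift_word).
Qed.

Lemma computable_t_instance : computable t_instance.
Proof.
apply: computable_pair; last exact: computable_comp (computable_snd _ _) computable_t_word.
apply: (computable_comp (computable_fst _ _)
          (g := fun yh : word * seq word => (t_word yh.1, map lift_word yh.2))).
apply: computable_pair.
  exact: computable_comp (computable_fst _ _) computable_t_word.
exact: computable_comp (computable_snd _ _) (computable_map computable_lift_word).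
Qed.

Lemma valid_lift_word n w : valid_word n w -> valid_word n.+1 (lift_word w).
Proof. by rewrite /valid_word all_map. Qed.

Lemma valid_t_word n w : valid_word n w -> valid_word n.+1 (t_word w).
Proof. exact: valid_lift_word. Qed.

Lemma all_valid_lift_word n (ws : seq word) :
  all (valid_word n) ws -> all (valid_word n.+1) (map lift_word ws).
Proof. by rewrite all_map => /allP ws_valid; apply/allP => w /ws_valid /valid_lift_word. Qed.

Lemma valid_lift_instance c n (i : Kin c * word) : Kvalid n i.1 /\ valid_word n i.2 ->
  Kvalid n.+1 (lift_instance i).1 /\ valid_word n.+1 (lift_instance i).2.
Proof.
case: c i => [[ks w] | [[y hs] w]] [Kv wv]; (split; last exact: valid_lift_word).
  exact: all_valid_lift_word.
case/andP: Kv => yv hsv.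
by apply/andP; split; [exact: valid_lift_word | exact: all_valid_lift_word].
Qed.

Lemma valid_t_instance n (i : Kin Coset * word) : Kvalid n i.1 /\ valid_word n i.2 ->
  Kvalid n.+1 (t_instance i).1 /\ valid_word n.+1 (t_instance i).2.
Proof.
case: i => [[y hs] w] [/andP [yv hsv] wv]; split; last exact: valid_t_word.
by apply/andP; split; [exact: valid_t_word | exact: all_valid_lift_word].
Qed.

Section SemidirectProduct.
Variable G : gstr.
Hypothesis HG : is_group G.
Variable psi : aut G.
Variable S : seq G.
Local Notation SG := (sdprod psi).
Local Notation sdS := (sd_gens psi S).

Definition embed (g : G) : SG := (0%R, g).

Lemma embedM (a b : G) : sd_mul psi (embed a) (embed b) = embed (gmul a b).
Proof. by rewrite /embed /sd_mul /= addr0. Qed.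

Lemma embedV (a : G) : sd_inv psi (embed a) = embed (ginv a).
Proof. by rewrite /embed /sd_inv /= oppr0. Qed.

Lemma weval_embed (L : seq G) w : weval (map embed L) w = embed (weval L w).
Proof.
have nth_embed i : nth (gone SG) (map embed L) i = embed (nth (gone G) L i).
  case: (ltnP i (size L)) => Hi; first by rewrite (nth_map (gone G)).
  by rewrite !nth_default ?size_map.
by elim: w => [|[i b] w IH] //=; rewrite IH nth_embed; case: b; rewrite ?embedV embedM.
Qed.

Lemma weval_lift_word w : weval sdS (lift_word w) = embed (weval S w).
Proof. by rewrite -weval_embed; elim: w => [|[i b] w IH] //=; rewrite IH. Qed.

Lemma weval_t_word w : weval sdS (t_word w) = ((1%R, weval S w) : SG).
Proof. by rewrite /t_word [weval _ _]/= weval_lift_word /sd_mul /= addr0 gmul1g. Qed.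

Lemma in_gen_lift (ks : seq word) (a : int) (b : G) :
  in_gen (map (weval sdS) (map lift_word ks)) ((a, b) : SG) <->
  a = 0%R /\ in_gen (map (weval S) ks) b.
Proof.
have -> : map (weval sdS) (map lift_word ks) = map embed (map (weval S) ks).
  by rewrite -!map_comp; apply: eq_map => w /=; rewrite weval_lift_word.
split=> [[w] | [-> [w ->]]]; last by exists w; rewrite weval_embed.
by rewrite weval_embed => -[-> ->]; split=> //; exists w.
Qed.

Lemma Kmem_lift c (K : Kin c) (a : int) (b : G) :
  Kmem sdS (lift_K K) ((a, b) : SG) <-> a = 0%R /\ Kmem S K b.
Proof.
case: c K => [ks | [y hs]] /=; first exact: in_gen_lift.
rewrite weval_lift_word; split=> [[[a' h] [/in_gen_lift [-> hH]]] | [-> [h [hH ->]]]].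
  by rewrite embedM => -[-> ->]; split=> //; exists h.
by exists (embed h); split; [exact/in_gen_lift | rewrite embedM].
Qed.

Lemma Kmem_t_coset y hs (a : int) (b : G) :
  Kmem sdS ((t_word y, map lift_word hs) : Kin Coset) ((a, b) : SG) <->
  a = 1%R /\ Kmem S ((y, hs) : Kin Coset) b.
Proof.
split=> [[[a' h] [/in_gen_lift [-> hH]]] | [-> [h [hH ->]]]].
  by rewrite weval_t_word /sd_mul /= => -[-> ->]; split=> //; exists h.
by exists (embed h); split; [exact/in_gen_lift | rewrite weval_t_word /sd_mul /=].
Qed.

Lemma conj_embed (x : G) (k : int) (g : G) :
  conjg_ (embed x) ((k, g) : SG) = embed (conjg_ (apow psi k x) g).
Proof.
rewrite /conjg_ /embed /= /sd_mul /sd_inv /= addr0 addNr; congr pair.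
by rewrite apowM apowNK.
Qed.

Lemma conj_t (x : G) (k : int) (g : G) :
  conjg_ ((1%R, x) : SG) ((k, g) : SG) =
  (1%R, gmul (gmul (ginv (af psi g)) (apow psi k x)) g).
Proof.
rewrite /conjg_ /= /sd_mul /sd_inv /= addrC addrA addrN add0r; congr pair.
by rewrite apowM apow_af apowNK afV.
Qed.

Lemma GCP_lift_instance c (i : Kin c * word) :
  GCP_prop S psi (lift_instance i) <-> GBrCP_prop S psi i.
Proof.
case: i => K x; rewrite /GCP_prop /GBrCP_prop weval_lift_word.
split=> [[[k g]] | [k [g Hg]]]; last by exists (k, g); rewrite conj_embed; exact/Kmem_lift.
by rewrite conj_embed => /Kmem_lift [_ Hg]; exists k, g.
Qed.

Lemma GCP_t_instance (i : Kin Coset * word) :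
  GCP_prop S psi (t_instance i) <-> GTCP_prop S psi i.
Proof.
case: i => [[y hs] x]; rewrite /GCP_prop /GTCP_prop weval_t_word.
split=> [[[k g]] | [z Hz]]; last first.
  by exists (0%R, z); rewrite conj_t; apply/Kmem_t_coset.
rewrite conj_t => /Kmem_t_coset [_]; rewrite [(_, x).2]/= => Hg.
have [w Ew] := twisted_conj_apow HG psi k (weval S x).
exists (gmul w g); congr (Kmem _ _ _): Hg.
by rewrite Ew af_mul (ginvM HG) !(gmulA HG).
Qed.

End SemidirectProduct.

Section ReductionToGCP.
Variables (G : gstr) (S : seq G) (c : klass).
Variable P : aut G -> Kin c * word -> Prop.
Variable T : Kin c * word -> Kin c * word.
Hypothesis computable_T : computable T.
Hypothesis valid_T : forall n i, Kvalid n i.1 /\ valid_word n i.2 ->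
  Kvalid n.+1 (T i).1 /\ valid_word n.+1 (T i).2.
Hypothesis GCP_T : forall psi i, GCP_prop S psi (T i) <-> P psi i.

Lemma Gproblem_fixed_of_GCP phi : GCP_fixed S phi c -> Gproblem_fixed S phi P.
Proof.
apply: decidable_on_reduce computable_T _ => i /valid_T Ti_valid.
by split; [exact: Ti_valid | exact: GCP_T].
Qed.

Lemma Gproblem_unif_of_GCP : GCP_unif S c -> Gproblem_unif S P.
Proof.
apply: (decidable_on_reduce (f := fun i : seq word * (Kin c * word) => (i.1, T i.2))).
  apply: computable_pair (computable_fst _ _) _.
  exact: computable_comp (computable_snd _ _) computable_T.
move=> [imgs i] [imgs_valid /valid_T Ti_valid]; split=> //.
by split=> -[psi [psi_imgs H]]; exists psi; split=> //; apply/GCP_T.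
Qed.

End ReductionToGCP.

Theorem corollary3p4 (G : gstr) (HG : is_group G) (S : seq G)
  (HS : generates S) (phi : aut G) :
  (GCP_fixed S phi FG -> GBrCP_fixed S phi FG) /\
  (GCP_unif S FG -> GBrCP_unif S FG) /\
  (GCP_fixed S phi Coset -> GBrCP_fixed S phi Coset /\ GTCP_fixed S phi Coset) /\
  (GCP_unif S Coset -> GBrCP_unif S Coset /\ GTCP_unif S Coset).
Proof.
(* The reductions work for any list [S]. *)
have BrCP_fixed c := Gproblem_fixed_of_GCP (computable_lift_instance c)
  (@valid_lift_instance c) (fun psi => @GCP_lift_instance G psi S c) (phi := phi).
have BrCP_unif c := Gproblem_unif_of_GCP (computable_lift_instance c)
  (@valid_lift_instance c) (fun psi => @GCP_lift_instance G psi S c).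
have TCP_fixed := Gproblem_fixed_of_GCP computable_t_instance
  valid_t_instance (fun psi => @GCP_t_instance G HG psi S) (phi := phi).
have TCP_unif := Gproblem_unif_of_GCP computable_t_instance
  valid_t_instance (fun psi => @GCP_t_instance G HG psi S).
split; [exact: BrCP_fixed | split; [exact: BrCP_unif | split]].
  by move=> H; split; [exact: BrCP_fixed | exact: TCP_fixed].
by move=> H; split; [exact: BrCP_unif | exact: TCP_unif].
Qed.
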